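(* Let $f:S^1\to S^1$ be a Denjoy homeomorphism as described in the context, $\Delta$ the partition of $S^1$ into $f$-orbits, $Y=S^1/\Delta$ with the quotient topology, and $p:S^1\to Y$ the projection. Then $p$ has property (CONT) but does not have property (COMP).
   Context: A Denjoy homeomorphism here is an orientation preserving homeomorphism $f:S^1\to S^1$ with irrational rotation number such that (i) there is a nowhere dense Cantor set $\Gamma\subset S^1$ with $f(\Gamma)=\Gamma$ and the orbit $\{f^k(x):k\in\mathbb{Z}\}$ of every $x\in\Gamma$ is dense in $\Gamma$; (ii) there is an open arc $J_0\subset S^1$ such that $S^1\setminus\Gamma=\bigsqcup_{m\in\mathbb{Z}} f^m(J_0)$ (disjoint union). A $\Delta$-map is a continuous $h:S^1\to S^1$ mapping each element of $\Delta$ into some element of $\Delta$; $\mathrm{End}(S^1,\Delta)$ is the monoid of $\Delta$-maps, $\mathrm{End}(Y)=C(Y,Y)$, and $\psi(h)$ is the unique map with $p\circ h=\psi(h)\circ p$. Property (COMP): for every compact $L\subset Y$ there is a compact $K\subset S^1$ with $p(K)=L$. Property (CONT): $\psi:\mathrm{End}(S^1,\Delta)\to\mathrm{End}(Y)$ is continuous with respect to compact open topologies (generated by subbasic sets $\{g: g(K)\subset U\}$, $K$ compact, $U$ open). *)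

From HB Require Import structures.
From mathcomp Require Import all_boot all_order all_algebra generic_quotient.
From mathcomp Require Import all_classical all_reals all_analysis.
Import numFieldNormedType.Exports.
Set Implicit Arguments. Unset Strict Implicit. Unset Printing Implicit Defensive.
Import Order.TTheory GRing.Theory Num.Theory.
Local Open Scope classical_set_scope.
Local Open Scope ring_scope.
Local Open Scope quotient_scope.

Section circle.
Variable R : realType.
Definition zrel : rel R := fun x y => (x - y) \is a Num.int.
Lemma zrel_refl : reflexive zrel. Proof. by move=> x; rewrite /zrel subrr rpred0. Qed.
Lemma zrel_sym : symmetric zrel.
Proof. by move=> x y; rewrite /zrel -opprB rpredN. Qed.
Lemma zrel_trans : transitive zrel.
Proof. by move=> y x z h1 h2; rewrite /zrel -(subrKA y) addrC; apply: rpredD. Qed.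
Definition zrel_equiv := EquivRel zrel zrel_refl zrel_sym zrel_trans.
Definition circle := {eq_quot zrel_equiv}.
HB.instance Definition _ := Topological.copy circle (quotient_topology circle).
HB.instance Definition _ := Quotient.on circle.
Definition cover : R -> circle := \pi_circle.
End circle.
Arguments cover {R}.

Section circle_maps.
Variable R : realType.
Local Notation S1 := (circle R).
Implicit Types (f : S1 -> S1) (F : R -> R).

Definition homeomorphism {X Y : topologicalType} (f : X -> Y) :=
  exists g : Y -> X, [/\ cancel f g, cancel g f, continuous f & continuous g].

Definition is_lift f F := continuous F /\ forall t, f (cover t) = cover (F t).

Definition orientation_preserving_homeo f :=
  homeomorphism f /\ exists F, is_lift f F /\ {homo F : x y / x < y}.

Definition irrational (x : R) := ~ exists q : rat, x = ratr q.

Definition irrational_rotation_number f :=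
  exists F (rho : R), [/\ is_lift f F,
    (forall x, (fun n : nat => (iter n F x - x) / n%:R) @ \oo --> rho)
    & irrational rho].

(** f^m (A) for m in Z (for bijective f, f^(-n)(A) is the preimage of A under f^n) *)
Definition zimage f (m : int) (A : set S1) : set S1 :=
  match m with
  | Posz n => iter n f @` A
  | Negz n => iter n.+1 f @^-1` A
  end.

Definition zorbit f (x : S1) : set S1 :=
  \bigcup_(k in [set: int]) zimage f k [set x].

Definition open_arc (J : set S1) :=
  exists a b : R, [/\ a < b, b - a <= 1 & J = cover @` `]a, b[ ].

Definition cantor_set {X : topologicalType} (C : set X) :=
  [/\ C !=set0, compact C, perfect_set C & totally_disconnected C].

Definition nowhere_dense {X : topologicalType} (A : set X) :=
  interior (closure A) = set0.

Definition denjoy f :=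
  [/\ orientation_preserving_homeo f, irrational_rotation_number f
    & (exists Gamma : set S1,
      [/\ cantor_set Gamma, nowhere_dense Gamma, f @` Gamma = Gamma,
        (forall x, Gamma x -> Gamma `<=` closure (zorbit f x)) &
        exists J0 : set S1, [/\ open_arc J0,
          ~` Gamma = \bigcup_(m in [set: int]) zimage f m J0 &
          forall m n : int, m != n -> zimage f m J0 `&` zimage f n J0 = set0]])].
End circle_maps.

Section orbit_quotient.
Variable R : realType.
Local Notation S1 := (circle R).
Variable f : S1 -> S1.

(** x ~ y iff f^m x = f^n y for some m n : nat; for a bijection f this says
    exactly that x and y lie in the same Z-orbit *)
Definition orbit_rel : rel S1 :=
  fun x y => `[< exists m n : nat, iter m f x = iter n f y >].

Lemma orbit_rel_refl : reflexive orbit_rel.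
Proof. by move=> x; apply/asboolP; exists 0%N, 0%N. Qed.
Lemma orbit_rel_sym : symmetric orbit_rel.
Proof.
move=> x y; apply/asboolP/asboolP => -[m [n e]]; by exists n, m.
Qed.
Lemma orbit_rel_trans : transitive orbit_rel.
Proof.
move=> y x z /asboolP [m [n e1]] /asboolP [a [b e2]]; apply/asboolP.
exists (a + m)%N, (b + n)%N.
by rewrite !iterD e1 -!iterD addnC iterD e2 -iterD addnC.
Qed.
Definition orbit_equiv := EquivRel orbit_rel orbit_rel_refl orbit_rel_sym orbit_rel_trans.
Definition orbit_space := {eq_quot orbit_equiv}.
HB.instance Definition _ := Topological.copy orbit_space (quotient_topology orbit_space).
HB.instance Definition _ := Quotient.on orbit_space.

Local Notation Y := orbit_space.
Definition proj : S1 -> Y := \pi_Y.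

Definition delta_maps : set {compact-open, S1 -> S1} :=
  [set h | continuous h /\ forall x y, orbit_rel x y -> orbit_rel (h x) (h y)].

(** psi(h): the unique map with p \o h = psi(h) \o p *)
Definition psi (h : S1 -> S1) : Y -> Y := fun y => proj (h (repr y)).

Definition End_delta := set_type delta_maps.

Definition psi_map (h : End_delta) : {compact-open, Y -> Y} := psi (set_val h).

Definition prop_CONT :=
  (forall h : End_delta, continuous (psi (set_val h))) /\ continuous psi_map.

Definition prop_COMP :=
  forall L : set Y, compact L -> exists K : set S1, compact K /\ proj @` K = L.
End orbit_quotient.

From Pilot Require Import Defs.
From HB Require Import structures.
From mathcomp Require Import all_boot all_order all_algebra generic_quotient.
From mathcomp Require Import all_classical all_reals all_analysis.
From mathcomp Require Import borel_hierarchy.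
From mathcomp Require Import lra zify.
Import numFieldNormedType.Exports.
Set Implicit Arguments. Unset Strict Implicit. Unset Printing Implicit Defensive.
Import Order.TTheory GRing.Theory Num.Theory.
Local Open Scope classical_set_scope.
Local Open Scope ring_scope.
Local Open Scope quotient_scope.

(** Let f be a Denjoy homeomorphism with minimal Cantor set Gamma and wandering
    arc J0, whose Z-images tile S^1 \ Gamma.  Two facts drive everything:
    - minimality: an open set of Y containing a point of p(Gamma) is all of Y
      (its pullback contains Gamma by density of orbits, and every wandering
      forward orbit accumulates on Gamma);
    - J0 is a fundamental domain for the wandering orbits: each of them meets
      J0 exactly once, and p restricted to J0 is open.
    (CONT): a subbasic set {psi(h)(C) in U} is controlled by a single point of
    Gamma when C meets p(Gamma), and otherwise by the compact lift of C in J0.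
    not (COMP): L = {p(c0)} + p(irrational points of a window of J0) is compact
    by minimality, but a compact K with p(K) = L would cover these irrational
    points by countably many closed rational-free sets, against Baire. *)

Section circle_topology.
Variable R : realType.
Local Notation S1 := (circle R).
Local Notation cover := (@Defs.cover R).

Lemma cover_eq (x y : R) : cover x = cover y <-> (x - y) \is a Num.int.
Proof. by split=> [/(@eqmodP _ (zrel_equiv R))|/(@eqmodP _ (zrel_equiv R))]. Qed.

Lemma cover_surj (z : S1) : exists x, cover x = z.
Proof. by exists (repr z); rewrite /Defs.cover reprK. Qed.

Lemma cover_continuous : continuous cover.
Proof. exact: pi_continuous. Qed.

(* The covering map R -> S^1 is open: the saturation of an open set is a union
   of its integer translates. *)
Lemma cover_open (A : set R) : open A -> open (cover @` A).
Proof.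
move=> oA; change (open (cover @^-1` (cover @` A))).
rewrite openE => s [u Au /cover_eq hus].
pose shift y := y + (u - s).
have oS : open (shift @^-1` A).
  by apply: open_comp => //= y _; apply: cvgD; [exact: cvg_id | exact: cvg_cst].
apply: (@filterS _ _ _ (shift @^-1` A)).
  move=> y /= Ay; exists (shift y) => //; apply/cover_eq.
  by rewrite /shift [y + _]addrC addrK.
by move: oS; rewrite openE => /(_ s); apply; rewrite /= /shift addrC subrK.
Qed.

Lemma cover_inj_short (s t : R) : `|s - t| < 1 -> cover s = cover t -> s = t.
Proof.
move=> st1 /cover_eq /intrP [m hm]; apply/eqP; rewrite -subr_eq0 hm intr_eq0.
by move: st1; rewrite hm -intr_norm ltrz1; case: m {hm} => [[|n]|n].
Qed.

(* The circle is the image of the compact segment [0, 1]. *)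
Lemma circle_compact : compact [set: S1].
Proof.
have -> : [set: S1] = cover @` `[0, 1].
  apply/seteqP; split => // z _; have [x <-] := cover_surj z.
  exists (x - (Num.floor x)%:~R).
    rewrite /= in_itv /= subr_ge0 floor_le /= lerBlDl.
    by have /andP[_ /ltW] := floor_itv x; rewrite intrD addrC.
  by apply/cover_eq; rewrite addrAC subrr add0r rpredN intr_int.
apply: continuous_compact; last exact: segment_compact.
by apply: continuous_subspaceT; exact: cover_continuous.
Qed.

(* Points with lifts u, v, u - v not an integer, are separated by the images of
   the balls of radius e/2 around u and v, e the distance from u - v to Z. *)
Lemma circle_hausdorff : hausdorff_space S1.
Proof.
rewrite open_hausdorff => x y xy.
have [u ux] := cover_surj x; have [v vy] := cover_surj y; subst x y.
set w := u - v; set fl := (Num.floor w)%:~R : R.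
have wni : w \isn't a Num.int by apply/negP => /cover_eq; apply/eqP.
have flw1 : w < fl + 1 by have := floorD1_gt w; rewrite intrD.
have flw : fl < w.
  rewrite lt_neqAle floor_le andbT; apply: contraNneq wni => <-.
  exact: intr_int.
set e := Num.min (w - fl) (1 - (w - fl)).
have e1 : e <= w - fl by rewrite /e ge_min lexx.
have e2 : e <= 1 - (w - fl) by rewrite /e ge_min lexx orbT.
have e0 : 0 < e by rewrite /e lt_min; apply/andP; split; lra.
exists (cover @` ball u (e / 2), cover @` ball v (e / 2)).
  by split; rewrite inE; [exists u | exists v] => //; apply: ballxx; lra.
split; [exact/cover_open/ball_open | exact/cover_open/ball_open |].
apply/eqP; apply/seteqP; split => // z [[u' bu <-] [v' bv /cover_eq /intrP [m hm]]].
have hw : w = u - v by [].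
move: bu bv; rewrite -!ball_normE /= => /ltr_normlP [bu1 bu2] /ltr_normlP [bv1 bv2].
have [j0|j0] := leP 0 (Num.floor w + m).
  have : 0 <= fl + m%:~R :> R by rewrite /fl -intrD ler0z.
  lra.
have : fl + m%:~R <= -1 :> R.
  have -> : (-1 : R) = (-1 : int)%:~R by rewrite intrN.
  by rewrite /fl -intrD ler_int; lia.
lra.
Qed.
End circle_topology.

Lemma iter_continuous (T : topologicalType) (h : T -> T) (n : nat) :
  continuous h -> continuous (iter n h).
Proof.
move=> hc; elim: n => [|n IH] x /=; first exact: cvg_id.
exact: (continuous_comp (IH x) (hc _)).
Qed.

Section homeomorphism_iterates.
Variable R : realType.
Local Notation S1 := (circle R).
Local Notation cover := (@Defs.cover R).
Variables f g : S1 -> S1.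
Hypotheses (fK : cancel f g) (gK : cancel g f) (fc : continuous f) (gc : continuous g).

Lemma iterK (n : nat) : cancel (iter n f) (iter n g).
Proof. by elim: n => [|n IH] x //; rewrite iterSr iterS fK IH. Qed.

Lemma iterKV (n : nat) : cancel (iter n g) (iter n f).
Proof. by elim: n => [|n IH] x //; rewrite iterSr iterS gK IH. Qed.

Lemma open_zimage (J : set S1) (m : int) : open J -> open (zimage f m J).
Proof.
move=> oJ; case: m => n /=; last by apply: open_comp => // x _; exact: iter_continuous.
have -> : iter n f @` J = iter n g @^-1` J.
  apply/seteqP; split => x /=; first by move=> [a Ja <-]; rewrite iterK.
  by move=> Jx; exists (iter n g x) => //; rewrite iterKV.
by apply: open_comp => // x _; exact: iter_continuous.
Qed.

Local Notation proj := (Defs.proj f).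

Lemma orbitP (x y : S1) :
  orbit_rel f x y <-> exists m n : nat, iter m f x = iter n f y.
Proof. by split => [/asboolP|/asboolP]. Qed.

Lemma projE (x y : S1) : proj x = proj y <-> orbit_rel f x y.
Proof. by split=> [/(@eqmodP _ (orbit_equiv f))|/(@eqmodP _ (orbit_equiv f))]. Qed.

Lemma proj_repr (y : orbit_space f) : proj (repr y) = y.
Proof. by rewrite /Defs.proj reprK. Qed.

(* The projection onto the orbit space is open: if f^m x = f^n z with x in O,
   then the continuous map g^m o f^n sends a neighbourhood of z into O. *)
Lemma orbit_proj_open (O : set S1) : open O -> open (proj @` O).
Proof.
move=> oO; change (open (proj @^-1` (proj @` O))).
rewrite openE => z [x Ox /projE /orbitP [m [n e]]].
pose back := iter m g \o iter n f.
have oB : open (back @^-1` O).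
  apply: open_comp => // w _.
  by apply: continuous_comp; apply: iter_continuous.
apply: (@filterS _ _ _ (back @^-1` O)).
  move=> w /= Ow; exists (back w) => //; apply/projE/orbitP; exists m, n.
  by rewrite /back /= iterKV.
by move: oB; rewrite openE => /(_ z); apply; rewrite /= /back /= -e iterK.
Qed.

(* For compact K, the reals t such that f^m(cover t) lies in f^n(K) form a
   closed set, as f^n(K) is compact in the Hausdorff circle. *)
Lemma closed_iterate_hits (K : set S1) (m n : nat) :
  compact K -> closed ((iter m f \o cover) @^-1` (iter n f @` K)).
Proof.
move=> cK; apply: preimage_closed.
  by move=> t _; apply: continuous_comp; [exact: cover_continuous | exact: iter_continuous].
apply: compact_closed; first exact: circle_hausdorff.
by apply: continuous_compact => //; apply: continuous_subspaceT; exact: iter_continuous.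
Qed.
End homeomorphism_iterates.

(* Baire category on an interval: countably many closed sets free of rationals
   miss some irrational point of ]c, d[.  Their complements are dense open sets,
   and so are the open dense sets whose intersection is the irrationals. *)
Lemma irrational_avoiding (R : realType) (T : countType) (C : T -> set R) (c d : R) :
  c < d -> (forall i, closed (C i)) -> (forall i t, C i t -> ~ rational t) ->
  exists t, [/\ c < t < d, ~ rational t & forall i, ~ C i t].
Proof.
move=> cd cC Crat; have [B oB irrB] := @irrational_Gdelta R.
pose Cn n := if unpickle n is Some i then C i else set0.
pose D n := ~` Cn n `&` B n.
have oD n : open (D n) /\ dense (D n).
  have oCn : open (~` Cn n).
    by rewrite openC /Cn; case: (unpickle n) => [i|]; [exact: cC | exact: closed0].
  split; first exact: openI oCn (oB n).1.
  apply: denseI => //; last exact: (oB n).2.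
  move=> V V0 oV; have [r [Vr [q _ qr]]] := dense_rat V0 oV.
  exists r; split => //; rewrite /Cn; case: (unpickle n) => [i|] // Cr.
  by apply: (Crat i r Cr); exists q.
have [|t [tcd tD]] := Baire oD _ (@itv_open _ _ c d).
  by exists ((c + d) / 2); rewrite /= in_itv /=; apply/andP; split; lra.
exists t; split; first by move: tcd; rewrite /= in_itv.
  suff : (\bigcap_i B i) t by rewrite -irrB.
  by move=> i _; exact: (tD i I).2.
by move=> i Cit; apply: (tD (pickle i) I).1; rewrite /Cn pickleK.
Qed.

Section delta_maps.
Variable R : realType.
Local Notation S1 := (circle R).
Variable f : S1 -> S1.
Local Notation Y := (orbit_space f).
Local Notation proj := (Defs.proj f).
Local Notation psi := (@Defs.psi R f).

Definition dmap (h : End_delta f) : S1 -> S1 := set_val h.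

Lemma dmap_orbit (h : End_delta f) (x y : S1) :
  orbit_rel f x y -> orbit_rel f (dmap h x) (dmap h y).
Proof. by have [_] := set_valP h; apply. Qed.

Lemma dmap_continuous (h : End_delta f) : continuous (dmap h).
Proof. by have [] := set_valP h. Qed.

Lemma psi_proj (h : End_delta f) (x : S1) : psi (dmap h) (proj x) = proj (dmap h x).
Proof.
by rewrite /psi; apply/projE; apply: dmap_orbit; apply/projE; rewrite proj_repr.
Qed.

(* psi(h) is continuous since its pullback along the quotient map is p o h. *)
Lemma psi_continuous (h : End_delta f) : continuous (psi (dmap h)).
Proof.
apply/continuousP => A oA; change (open (proj @^-1` (psi (dmap h) @^-1` A))).
have -> : proj @^-1` (psi (dmap h) @^-1` A) = dmap h @^-1` (proj @^-1` A).
  by apply/seteqP; split => x /=; rewrite psi_proj.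
by apply: open_comp => // x _; exact: dmap_continuous.
Qed.
End delta_maps.

Section denjoy_structure.
Variable R : realType.
Local Notation S1 := (circle R).
Variables f g : S1 -> S1.
Hypotheses (fK : cancel f g) (gK : cancel g f) (fc : continuous f) (gc : continuous g).
Local Notation Y := (orbit_space f).
Local Notation cover := (@Defs.cover R).
Local Notation proj := (Defs.proj f).
Local Notation psi := (@Defs.psi R f).

Variables (Gamma J0 : set S1).
Hypothesis f_Gamma : f @` Gamma = Gamma.
Hypothesis Gamma_minimal : forall x, Gamma x -> Gamma `<=` closure (zorbit f x).
Hypothesis open_J0 : open J0.
Hypothesis J0_tiles : ~` Gamma = \bigcup_(m in [set: int]) zimage f m J0.
Hypothesis J0_wandering :
  forall m n : int, m != n -> zimage f m J0 `&` zimage f n J0 = set0.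

Lemma gamma_invariant (x y : S1) : orbit_rel f x y -> Gamma x -> Gamma y.
Proof.
have iterG n z : Gamma (iter n f z) <-> Gamma z.
  elim: n => [|n IH] //=; rewrite -IH; split => [|Gz].
    by rewrite -{1}f_Gamma => -[w Gw /(can_inj fK) <-].
  by rewrite -f_Gamma; exists (iter n f z).
by move=> /orbitP [m [n e]] /(iterG m); rewrite e => /iterG.
Qed.

Lemma J0_not_gamma (x : S1) : J0 x -> ~ Gamma x.
Proof.
by move=> Jx Gx; have : (~` Gamma) x by rewrite J0_tiles; exists 0 => //=; exists x.
Qed.

Lemma wandering_meets_J0 (z : S1) : ~ Gamma z -> exists x, J0 x /\ orbit_rel f x z.
Proof.
move=> nGz; have : (~` Gamma) z by [].
rewrite J0_tiles => -[[n|n] _ /=].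
  by move=> [x Jx <-]; exists x; split => //; apply/orbitP; exists n, 0%N.
by move=> Jz; exists (iter n.+1 f z); split => //; apply/orbitP; exists 0%N, n.+1.
Qed.

Lemma J0_orbit_inj (x y : S1) : J0 x -> J0 y -> orbit_rel f x y -> x = y.
Proof.
move=> Jx Jy /orbitP [m [n e]]; have [mn|mn] := eqVneq m n.
  by rewrite -mn in e; exact: (can_inj (iterK fK m) e).
have := @J0_wandering m n; rewrite eqz_nat mn => /(_ isT) /seteqP [+ _].
by move=> /(_ (iter m f x)) []; split; [exists x | rewrite e; exists y].
Qed.

Lemma J0_section (y : Y) : ~ Gamma (repr y) -> exists x, J0 x /\ proj x = y.
Proof.
move=> /wandering_meets_J0 [x [Jx xy]]; exists x; split => //.
by rewrite -(proj_repr y); apply/projE.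
Qed.

(* The forward orbit of a wandering point accumulates only on Gamma: near a
   point of f^k(J0) it would have to visit f^k(J0) at a time n > |k|. *)
Lemma forward_cluster_gamma (x : S1) :
  J0 x -> cluster ((fun n => iter n f x) @ \oo) `<=` Gamma.
Proof.
move=> Jx q clq; apply: contrapT => nGq.
have : (~` Gamma) q by [].
rewrite J0_tiles => -[k _ kq].
have [] := clq [set iter n f x | n in [set n | (`|k| < n)%N]] (zimage f k J0).
- by exists `|k|.+1 => // n /= kn; exists n.
- by apply: open_nbhs_nbhs; split => //; exact: open_zimage.
move=> _ [[n /= kn <-] kn_x].
have nk : Posz n != k by apply/eqP => nk; move: kn; rewrite -nk /=; lia.
have /seteqP [+ _] := J0_wandering nk => /(_ (iter n f x)) /=.
by case; split => //; exists x.
Qed.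

(* Minimality of Gamma in the orbit space: an open set of Y containing a point of
   p(Gamma) is all of Y.  Its pullback V contains Gamma by density of orbits,
   and every wandering orbit accumulates on Gamma, hence enters V. *)
Lemma open_gamma_full (U : set Y) (c : S1) :
  Gamma c -> open U -> U (proj c) -> U = setT.
Proof.
move=> Gc oU Uc; pose V := proj @^-1` U.
have oV : open V := oU.
have V_sat x y : orbit_rel f x y -> V x -> V y by move=> /projE e; rewrite /V /= e.
have GV : Gamma `<=` V.
  move=> y Gy; have := Gamma_minimal Gy Gc; rewrite closureEnbhs.
  case/(_ (zorbit f y) V) => [//||z [[[n|n] _ /=] Vz]].
  - by apply: open_nbhs_nbhs; split.
  - by case: Vz => _ -> <- Vz; apply: (V_sat _ _ _ Vz); apply/orbitP; exists 0%N, n.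
  - by move: Vz => <- Vz; apply: (V_sat _ _ _ Vz); apply/orbitP; exists n.+1, 0%N.
apply/seteqP; split => // y _; rewrite -(proj_repr y); change (V (repr y)).
have [/GV //|/wandering_meets_J0 [x [Jx xy]]] := pselect (Gamma (repr y)).
apply: (V_sat _ _ xy).
have [q [_ clq]] := circle_compact (F := (fun n => iter n f x) @ \oo) _ filterT.
have [] := clq [set iter n f x | n in [set: nat]] V.
- by exists 0%N => // n _; exists n.
- by apply: open_nbhs_nbhs; split => //; exact/GV/(forward_cluster_gamma Jx).
by move=> _ [[n _ <-] Vn]; apply: (V_sat _ _ _ Vn); apply/orbitP; exists 0%N, n.
Qed.

(* Over a compact set C of Y avoiding p(Gamma), the fundamental domain J0 gives
   a compact lift: p restricted to J0 is injective and open. *)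
Lemma compact_J0_trace (C : set Y) :
  compact C -> (forall y, C y -> ~ Gamma (repr y)) -> compact (J0 `&` proj @^-1` C).
Proof.
move=> cC CnG F PF FK.
have FC : (proj @ F) C by change (F (proj @^-1` C)); apply: filterS FK => x [].
have [y [Cy cly]] := cC _ _ FC.
have [x [Jx pxy]] := J0_section (CnG y Cy).
exists x; split; first by split => //; rewrite /= pxy.
move=> B N FB; rewrite nbhsE; move=> [W [oW Wx] WN].
have oPW : open (proj @` (W `&` J0)) by apply: orbit_proj_open => //; exact: openI.
have [] := cly (proj @` (B `&` (J0 `&` proj @^-1` C))) (proj @` (W `&` J0)).
- change (F (proj @^-1` (proj @` (B `&` (J0 `&` proj @^-1` C))))).
  by apply: filterS (filterI FB FK) => z zB; exists z.
- by apply: open_nbhs_nbhs; split => //; exists x; [split|].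
move=> _ [[b [Bb [Jb _]] <-] [w [Ww Jw] /projE wb]].
by exists b; split => //; apply: WN; rewrite -(J0_orbit_inj Jw Jb wb).
Qed.

(* The compact-open control behind (CONT): a subbasic neighbourhood of psi(h)
   is the image of a subbasic neighbourhood of h.  If C meets p(Gamma), a single
   point of Gamma suffices (by minimality); otherwise C lifts to a compact K in J0. *)
Lemma psi_subbasic_control (h : End_delta f) (C U : set Y) :
  compact C -> open U -> psi (dmap h) @` C `<=` U ->
  exists K : set S1, [/\ compact K, dmap h @` K `<=` proj @^-1` U &
    forall k : End_delta f, dmap k @` K `<=` proj @^-1` U -> psi (dmap k) @` C `<=` U].
Proof.
move=> cC oU hCU.
have [[y [Cy Gy]]|CnG] := pselect (exists y, C y /\ Gamma (repr y)).
  exists [set repr y]; split; first exact: compact_set1.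
    by move=> _ [_ -> <-]; rewrite /= -psi_proj proj_repr; apply: hCU; exists y.
  move=> k kK; have psiU_full : psi (dmap k) @^-1` U = setT.
    apply: (open_gamma_full Gy); first by apply: open_comp => // z _; exact: psi_continuous.
    by rewrite /= psi_proj; apply: kK; exists (repr y).
  by move=> _ [z _ <-]; have : (psi (dmap k) @^-1` U) z by rewrite psiU_full.
have {}CnG y : C y -> ~ Gamma (repr y) by move=> Cy Gy; apply: CnG; exists y.
exists (J0 `&` proj @^-1` C); split; first exact: compact_J0_trace.
  by move=> _ [x [Jx Cx] <-]; rewrite /= -psi_proj; apply: hCU; exists (proj x).
move=> k kK _ [y Cy <-]; have [x [Jx pxy]] := J0_section (CnG y Cy).
by rewrite -pxy psi_proj; apply: kK; exists x => //; split => //; rewrite /= pxy.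
Qed.

Lemma psi_map_continuous : continuous (@psi_map R f).
Proof.
move=> h; have Fh : Filter (@psi_map R f @ h) by apply: fmap_filter; exact: nbhs_filter.
have [_] := @compact_open_cvgP Y Y _ (psi_map h) Fh; apply => C U cC oU hCU.
have [K [cK hK kK]] := psi_subbasic_control cC oU hCU.
have val_cont : continuous (set_val : End_delta f -> {compact-open, S1 -> S1}).
  exact: initial_continuous.
have hK_nbhs : nbhs (set_val h)
    ([set k | k @` K `<=` proj @^-1` U] : set {compact-open, S1 -> S1}).
  by apply: open_nbhs_nbhs; split; [exact: compact_open_open | exact: hK].
apply: (@filterS _ (nbhs h) _ (set_val @^-1` [set k | k @` K `<=` proj @^-1` U])).
  by move=> k; exact: kK.
exact: val_cont hK_nbhs.
Qed.

(* Any subset of Y containing a point of p(Gamma) is compact: the only open set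
   around that point is Y itself. *)
Lemma compact_of_gamma_point (L : set Y) (c : S1) : Gamma c -> L (proj c) -> compact L.
Proof.
move=> Gc Lc F PF FL; exists (proj c); split => // A B FA.
rewrite nbhsE; move=> [W [oW Wc] WB]; have [y Ay] := filter_ex FA.
exists y; split => //; apply: WB.
by rewrite (open_gamma_full Gc oW Wc).
Qed.

(* L = p(c0) + p(irrational points of a window in J0) is
   compact, but a compact K with p(K) = L would cover the irrationals of the window
   by countably many closed sets "f^m(cover t) in f^n(K)" free of rationals. *)
Lemma not_prop_COMP (a b : R) : a < b -> b - a <= 1 -> J0 = cover @` `]a, b[ ->
  Gamma !=set0 -> ~ prop_COMP f.
Proof.
move=> ab ba1 J0E [c0 Gc0] COMP.
pose c := a + (b - a) / 4; pose d := b - (b - a) / 4.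
have ac : a < c by rewrite /c; lra.
have cd : c < d by rewrite /c /d; lra.
have db : d < b by rewrite /d; lra.
have dc1 : d - c < 1 by rewrite /c /d; lra.
pose L : set Y := [set proj c0] `|`
  [set proj (cover t) | t in [set t | c < t < d /\ ~ rational t]].
have [K [cK KL]] := COMP L (compact_of_gamma_point Gc0 (or_introl erefl)).
have J0_window t : c <= t <= d -> J0 (cover t).
  move=> /andP [ct td]; rewrite J0E; exists t => //.
  by rewrite /= in_itv /=; apply/andP; split; lra.
have window_inj s t : c <= s <= d -> c <= t <= d ->
    orbit_rel f (cover s) (cover t) -> s = t.
  move=> sw tw st; apply: cover_inj_short (J0_orbit_inj (J0_window s sw) (J0_window t tw) st).
  by move: sw tw => /andP [? ?] /andP [? ?]; rewrite ltr_norml; apply/andP; split; lra.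
pose hits (mn : nat * nat) :=
  [set t | c <= t <= d /\ (iter mn.2 f @` K) (iter mn.1 f (cover t))].
have hits_closed mn : closed (hits mn).
  have -> : hits mn = `[c, d] `&` ((iter mn.1 f \o cover) @^-1` (iter mn.2 f @` K)).
    by apply/seteqP; split => t /=; rewrite in_itv /=.
  by apply: closedI; [exact: itv_closed | exact: closed_iterate_hits].
have hits_irrational mn t : hits mn t -> ~ rational t.
  move=> [tw [k Kk e]] rt.
  have kt : orbit_rel f k (cover t) by apply/orbitP; exists mn.2, mn.1.
  have : L (proj k) by rewrite -KL; exists k.
  case=> [/projE kc0 | [s [sw irs] /projE sk]].
    apply: (J0_not_gamma (J0_window t tw)); apply: gamma_invariant Gc0.
    by apply: (orbit_rel_trans _ kt); rewrite orbit_rel_sym; exact: kc0.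
  apply: irs; rewrite (window_inj s t _ tw (orbit_rel_trans sk kt)) //.
  by move: sw => /andP [? ?]; apply/andP; split; apply: ltW.
have [t [tw irt tnh]] := irrational_avoiding cd hits_closed hits_irrational.
have : L (proj (cover t)) by right; exists t.
rewrite -KL => -[k Kk /projE /orbitP [m [n e]]].
apply: (tnh (n, m)); split; last by exists k.
by move: tw => /andP [? ?]; apply/andP; split; apply: ltW.
Qed.
End denjoy_structure.

Theorem mainTheorem14 (R : realType) (f : circle R -> circle R) :
  denjoy f -> prop_CONT f /\ ~ prop_COMP f.
Proof.
move=> [[[g [fK gK fc gc]] _] _ [Gamma [[Gamma_ne _ _ _] _ f_Gamma Gamma_minimal
  [J0 [[a [b [ab ba1 J0E]]] J0_tiles J0_wandering]]]]].
have open_J0 : open J0 by rewrite J0E; apply: cover_open; exact: itv_open.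
split; first split.
- by move=> h; exact: psi_continuous.
- exact: (psi_map_continuous fK gK fc gc Gamma_minimal open_J0 J0_tiles J0_wandering).
- exact: (not_prop_COMP fK gK fc gc f_Gamma Gamma_minimal open_J0 J0_tiles
    J0_wandering ab ba1 J0E Gamma_ne).
Qed.
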